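(* Let $f:[0,1]\to[0,\infty)$ be a function that is concave and increasing on $[0,\tfrac12]$ and satisfies $f(x)=f(1-x)$ for all $x\in[0,1]$. Let $k\ge 1$ and let $x_1,\dots,x_k\in[-1,1]$ be real numbers such that $x:=\sum_{i=1}^k x_i\in[-1,1]$. Then \[ f(|x|)\le \sum_{i=1}^k f(|x_i|). \] *)

From Stdlib Require Import Reals.
Open Scope R_scope.

Definition concave_on (f : R -> R) (a b : R) : Prop :=
  forall x y t, a <= x <= b -> a <= y <= b -> 0 <= t <= 1 ->
    t * f x + (1 - t) * f y <= f (t * x + (1 - t) * y).

Definition increasing_on (f : R -> R) (a b : R) : Prop :=
  forall x y, a <= x <= b -> a <= y <= b -> x <= y -> f x <= f y.

Definition sum1 (u : nat -> R) (k : nat) : R :=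
  sum_f_R0 (fun j => u (S j)) (k - 1).

(* Let d(t) be the distance from t to the nearest integer; d is subadditive,
   being a quotient distance on R/Z, and takes values in [0, 1/2].  A
   nonnegative concave increasing function on [0, 1/2] is subadditive there,
   so F := f o d is subadditive on all of R, hence F (sum x_i) <= sum F x_i.
   Finally, on [-1, 1] we have d x = min(|x|, 1 - |x|), so the symmetry
   f x = f (1 - x) gives F x = f |x|. *)

From Stdlib Require Import Reals Lra Lia ZArith.
Open Scope R_scope.

Definition dist_int (t : R) : R := Rmin (frac_part t) (1 - frac_part t).

Lemma dist_int_bounds t : 0 <= dist_int t <= 1/2.
Proof.
  destruct (base_fp t); unfold dist_int, Rmin; destruct Rle_dec; lra.
Qed.

Lemma dist_int_attained t : exists n : Z, dist_int t = Rabs (t - IZR n).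
Proof.
  destruct (base_fp t); unfold dist_int, Rmin, frac_part in *; destruct Rle_dec.
  - exists (Int_part t); rewrite Rabs_right; lra.
  - exists (Int_part t + 1)%Z; rewrite plus_IZR, Rabs_left1; lra.
Qed.

Lemma dist_int_le t (n : Z) : dist_int t <= Rabs (t - IZR n).
Proof.
  destruct (base_fp t); unfold dist_int, Rmin, frac_part in *.
  destruct (Z.le_gt_cases n (Int_part t)) as [le_n | gt_n].
  - apply IZR_le in le_n; destruct Rle_dec; rewrite Rabs_right; lra.
  - assert (le_Sn : (Int_part t + 1 <= n)%Z) by lia.
    apply IZR_le in le_Sn; rewrite plus_IZR in le_Sn.
    destruct Rle_dec; rewrite Rabs_left1; lra.
Qed.

Lemma dist_int_triang a b : dist_int (a + b) <= dist_int a + dist_int b.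
Proof.
  destruct (dist_int_attained a) as [m ->], (dist_int_attained b) as [n ->].
  apply (Rle_trans _ _ _ (dist_int_le _ (m + n))).
  rewrite plus_IZR.
  replace (a + b - (IZR m + IZR n)) with ((a - IZR m) + (b - IZR n)) by ring.
  apply Rabs_triang.
Qed.

Lemma dist_int_small x : -1 <= x <= 1 -> dist_int x = Rmin (Rabs x) (1 - Rabs x).
Proof.
  intros Hx; apply Rle_antisym.
  - apply Rmin_glb.
    + rewrite <- (Rminus_0_r x) at 2; apply dist_int_le.
    + destruct (Rle_dec 0 x).
      * pose proof (dist_int_le x 1); rewrite (Rabs_right x), Rabs_left1 in *; lra.
      * pose proof (dist_int_le x (-1)); rewrite (Rabs_left x), Rabs_right in *; lra.
  - destruct (dist_int_attained x) as [n ->].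
    destruct (Z.eq_dec n 0) as [-> | n_neq0].
    + rewrite Rminus_0_r; apply Rmin_l.
    + apply (Rle_trans _ _ _ (Rmin_r _ _)).
      assert (1 <= Rabs (IZR n)) by (rewrite <- abs_IZR; apply IZR_le; lia).
      pose proof (Rabs_triang_inv (IZR n) x).
      rewrite Rabs_minus_sym; lra.
Qed.

Lemma symmetric_comp_dist_int (f : R -> R) x :
  (forall y, 0 <= y <= 1 -> f y = f (1 - y)) -> -1 <= x <= 1 ->
  f (dist_int x) = f (Rabs x).
Proof.
  intros f_symm Hx; rewrite dist_int_small by exact Hx.
  unfold Rmin; destruct Rle_dec; [reflexivity|].
  rewrite (f_symm (Rabs x)); [reflexivity|].
  unfold Rabs; destruct Rcase_abs; lra.
Qed.

Lemma subadditive_sum_f_R0 (g : R -> R) :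
  (forall a b, g (a + b) <= g a + g b) ->
  forall u n, g (sum_f_R0 u n) <= sum_f_R0 (fun i => g (u i)) n.
Proof.
  intros g_sub u n; induction n as [|n IH]; simpl; [lra|].
  apply (Rle_trans _ _ _ (g_sub _ _)); lra.
Qed.

Section ConcaveSubadditive.

Variables (f : R -> R) (b : R).
Hypothesis f_nonneg : forall x, 0 <= x <= b -> 0 <= f x.
Hypothesis f_concave : concave_on f 0 b.
Hypothesis f_incr : increasing_on f 0 b.

(* Concavity between 0 and s at t = u / s, dropping the term (1 - t) f 0 >= 0. *)
Lemma concave_chord_le u s : 0 <= u <= s -> 0 < s <= b -> u * f s <= s * f u.
Proof.
  intros Hu Hs.
  set (t := u / s).
  assert (ts : t * s = u) by (unfold t; field; lra).
  assert (Ht : 0 <= t <= 1) by (split; apply (Rmult_le_reg_r s); lra).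
  pose proof (f_concave s 0 t ltac:(lra) ltac:(lra) Ht) as Hc.
  rewrite Rmult_0_r, Rplus_0_r, ts in Hc.
  assert (0 <= f 0) by (apply f_nonneg; lra).
  nra.
Qed.

Lemma concave_subadditive u v w : 0 <= u <= b -> 0 <= v <= b -> 0 <= w <= b ->
  w <= u + v -> f w <= f u + f v.
Proof.
  intros Hu Hv Hw Hwuv.
  destruct (Req_dec (u + v) 0) as [uv0 | uv_neq0].
  - replace w with 0 by lra; replace u with 0 by lra; replace v with 0 by lra.
    assert (0 <= f 0) by (apply f_nonneg; lra); lra.
  - set (s := Rmin (u + v) b).
    assert (Hs : 0 < s <= b /\ s <= u + v /\ u <= s /\ v <= s /\ w <= s)
      by (unfold s, Rmin; destruct Rle_dec; lra).
    destruct Hs as (Hs & s_le_uv & u_le_s & v_le_s & w_le_s).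
    pose proof (concave_chord_le u s ltac:(lra) Hs).
    pose proof (concave_chord_le v s ltac:(lra) Hs).
    assert (f w <= f s) by (apply f_incr; lra).
    assert (0 <= f s) by (apply f_nonneg; lra).
    assert (scaled : s * f s <= s * (f u + f v)) by nra.
    apply Rmult_le_reg_l in scaled; lra.
Qed.

End ConcaveSubadditive.

Theorem lemma1 (f : R -> R)
  (hnonneg : forall x, 0 <= x <= 1 -> 0 <= f x)
  (hconc : concave_on f 0 (1/2))
  (hincr : increasing_on f 0 (1/2))
  (hsymm : forall x, 0 <= x <= 1 -> f x = f (1 - x))
  (k : nat) (hk : (1 <= k)%nat)
  (xs : nat -> R)
  (hxs : forall i, (1 <= i <= k)%nat -> -1 <= xs i <= 1)
  (hx : -1 <= sum1 xs k <= 1) :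
  f (Rabs (sum1 xs k)) <= sum1 (fun i => f (Rabs (xs i))) k.
Proof.
  set (F t := f (dist_int t)).
  assert (F_sub : forall a c, F (a + c) <= F a + F c).
  { intros a c; apply (concave_subadditive f (1/2)); try apply dist_int_bounds;
      [intros; apply hnonneg; lra | exact hconc | exact hincr | apply dist_int_triang]. }
  rewrite <- (symmetric_comp_dist_int f _ hsymm hx); unfold sum1 in *.
  apply (Rle_trans _ _ _ (subadditive_sum_f_R0 F F_sub _ _)).
  right; apply sum_eq; intros i Hi.
  apply symmetric_comp_dist_int, hxs; [exact hsymm | lia].
Qed.
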